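(* Let $N\ge 2$ and let $P_1,\dots,P_N$ be probability densities on a feature space $\mathcal{X}$, and let $\overline{P}=\frac{1}{N}\sum_{i=1}^N P_i$. Let $\mathcal{D}^*$ be the optimal discriminator for the least-squares objective $J_{\mathcal D}=\sum_{i=1}^N \mathbb{E}_{\mathbf f\sim P_i}\big[\sum_{j=1}^N(\mathcal{D}_j(\mathbf f)-\mathbb{1}_{\{i=j\}})^2\big]$ over discriminators $\mathcal D:\mathcal X\to\{v\in\mathbb{R}^N: v_i\ge 0,\ \sum_i v_i=1\}$, namely $\mathcal{D}^*_i(\mathbf f)=P_i(\mathbf f)/\sum_{j=1}^N P_j(\mathbf f)$. Define the domain loss of the feature extractor as $$J^{\mathcal D}_{\mathcal F_s}=\sum_{i=1}^N \mathbb{E}_{\mathbf f\sim P_i}\Big[\sum_{j=1}^N\Big(\mathcal{D}^*_j(\mathbf f)-\frac1N\Big)^2\Big].$$ Then $$J^{\mathcal D}_{\mathcal F_s}=\frac1N\sum_{i=1}^N \chi^2_{\mathrm{Neyman}}(P_i\,\|\,\overline{P}),$$ where $\chi^2_{\mathrm{Neyman}}(P_i\|\overline P)=\int \frac{(P_i(\mathbf f)-\overline P(\mathbf f))^2}{\overline P(\mathbf f)}\,d\mathbf f$.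
   Context: In the paper, $P_i$ is the distribution of shared features $\mathcal F_s(x)$ for inputs $x$ from domain $i$; the paper calls the divergence $\int (P-\overline P)^2/\overline P$ the Neyman $\chi^2$ divergence of $P$ from $\overline P$. *)

From HB Require Import structures.
From mathcomp Require Import all_boot all_order all_algebra.
From mathcomp Require Import all_classical all_reals all_analysis.
Set Implicit Arguments. Unset Strict Implicit. Unset Printing Implicit Defensive.
Import Order.TTheory GRing.Theory Num.Theory.
Local Open Scope ring_scope.

Section defs.
Context (d : measure_display) (X : measurableType d) (R : realType).

Definition mixture (N : nat) (P : 'I_N -> X -> R) (x : X) : R :=
  N%:R^-1 * \sum_(i < N) P i x.

(* optimal least-squares discriminator D*_i(f) = P_i(f) / sum_j P_j(f)
   (MathComp convention x / 0 = 0 where all densities vanish) *)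
Definition Dstar (N : nat) (P : 'I_N -> X -> R) (i : 'I_N) (x : X) : R :=
  P i x / \sum_(j < N) P j x.

Definition expect_dens (mu : {measure set X -> \bar R}) (p g : X -> R) : \bar R :=
  (\int[mu]_x (p x * g x)%:E)%E.

(* Neyman chi^2 divergence  int (p - q)^2 / q  (with 0/0 = 0) *)
Definition chi2_neyman (mu : {measure set X -> \bar R}) (p q : X -> R) : \bar R :=
  (\int[mu]_x (((p x - q x) ^+ 2) / q x)%:E)%E.

Definition domain_loss (mu : {measure set X -> \bar R}) (N : nat)
    (P : 'I_N -> X -> R) : \bar R :=
  (\sum_(i < N) expect_dens mu (P i)
     (fun x => (\sum_(j < N) (Dstar P j x - N%:R^-1) ^+ 2)%R))%E.

Definition is_density (mu : {measure set X -> \bar R}) (p : X -> R) : Prop :=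
  [/\ measurable_fun setT p, (forall x, 0 <= p x) & (\int[mu]_x (p x)%:E = 1)%E].
End defs.

(** Pointwise, with [s = \sum_j P_j] and mixture [s / N], the inner sum weighted
    by [\sum_i P_i = s] is [s \sum_j (P_j / s - 1/N)^2 = \sum_j (P_j - s/N)^2 / s],
    which is [1/N] times the Neyman integrand summed over the domains; the
    identity survives [s = 0] because both sides then vanish ([x / 0 = 0]).
    Integrating and exchanging the finite sums with the integrals (all
    integrands are nonnegative) gives the theorem. *)

From HB Require Import structures.
From mathcomp Require Import all_boot all_order all_algebra.
From mathcomp Require Import all_classical all_reals all_analysis.
From mathcomp Require Import measurable_realfun.
From mathcomp Require Import ring.
Import Order.TTheory GRing.Theory Num.Theory.
Local Open Scope ring_scope.

Lemma sum_mul_sqr_dev_ratio (F : fieldType) (n : nat) (p : 'I_n -> F) :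
  n%:R != 0 :> F ->
  \sum_(i < n) p i * \sum_(j < n) (p j / \sum_(k < n) p k - n%:R^-1) ^+ 2 =
  n%:R^-1 * \sum_(j < n)
    (p j - n%:R^-1 * \sum_(k < n) p k) ^+ 2 / (n%:R^-1 * \sum_(k < n) p k).
Proof.
move=> n_neq0; rewrite -big_distrl /=.
set s := \sum_(k < n) p k.
have [->|s_neq0] := eqVneq s 0.
  by rewrite mul0r mulr0 invr0 big1 ?mulr0 // => j _; rewrite mulr0.
rewrite mulr_sumr mulr_sumr; apply: eq_bigr => j _.
by field; rewrite n_neq0 s_neq0.
Qed.

Lemma ge0_measurable_funV (d : measure_display) (T : measurableType d)
    (R : realType) (f : T -> R) :
  measurable_fun setT f -> (forall x, 0 <= f x) ->
  measurable_fun setT (fun x => (f x)^-1).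
Proof.
move=> mf f_ge0.
rewrite (_ : (fun x => _) = (fun x => f x `^ (-1))); last first.
  by apply: funext => x; rewrite powR_inv1.
exact: measurableT_comp (measurable_powR _) mf.
Qed.

Lemma ge0_sum_integral_EFin (d : measure_display) (T : measurableType d)
    (R : realType) (mu : {measure set T -> \bar R}) (n : nat)
    (f : 'I_n -> T -> R) :
  (forall i, measurable_fun setT (f i)) -> (forall i x, 0 <= f i x) ->
  (\sum_(i < n) \int[mu]_x (f i x)%:E = \int[mu]_x (\sum_(i < n) f i x)%:E)%E.
Proof.
move=> mf f_ge0.
under eq_integral do rewrite -sumEFin.
rewrite ge0_integral_sum // => [i|i x _]; last by rewrite lee_fin.
exact/measurable_EFinP.
Qed.

Section domain_loss_integrals.
Variables (d : measure_display) (X : measurableType d) (R : realType).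
Variables (mu : {measure set X -> \bar R}) (N : nat) (P : 'I_N -> X -> R).
Hypothesis mP : forall i, measurable_fun setT (P i).
Hypothesis P_ge0 : forall i x, 0 <= P i x.

Let sumP x := \sum_(j < N) P j x.

Let measurable_sumP : measurable_fun setT sumP.
Proof. exact: measurable_sum. Qed.

Let sumP_ge0 x : 0 <= sumP x.
Proof. exact: sumr_ge0. Qed.

Lemma measurable_mixture : measurable_fun setT (mixture P).
Proof. exact: measurable_funM. Qed.

Lemma mixture_ge0 x : 0 <= mixture P x.
Proof. by rewrite mulr_ge0 ?invr_ge0 ?sumP_ge0. Qed.

Lemma measurable_Dstar j : measurable_fun setT (Dstar P j).
Proof.
apply: measurable_funM => //.
exact: ge0_measurable_funV measurable_sumP sumP_ge0.
Qed.

Lemma domain_loss_integral : domain_loss mu P =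
  (\int[mu]_x (\sum_(i < N) P i x *
                 \sum_(j < N) (Dstar P j x - N%:R^-1) ^+ 2)%:E)%E.
Proof.
apply: ge0_sum_integral_EFin => [i|i x].
- apply/measurable_funM/measurable_sum => // j.
  exact/measurable_funX/measurable_funB/measurable_cst/measurable_Dstar.
- by rewrite mulr_ge0 ?sumr_ge0 // => j _; rewrite sqr_ge0.
Qed.

Lemma scaled_sum_chi2_neyman_integral :
  ((N%:R^-1)%:E * \sum_(i < N) chi2_neyman mu (P i) (mixture P))%E =
  (\int[mu]_x (N%:R^-1 * \sum_(i < N)
                 (P i x - mixture P x) ^+ 2 / mixture P x)%:E)%E.
Proof.
have m_neyman i :
    measurable_fun setT (fun x => (P i x - mixture P x) ^+ 2 / mixture P x).
  apply: measurable_funM.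
    exact/measurable_funX/measurable_funB/measurable_mixture.
  exact/ge0_measurable_funV/mixture_ge0/measurable_mixture.
have neyman_ge0 i x : 0 <= (P i x - mixture P x) ^+ 2 / mixture P x.
  by rewrite mulr_ge0 ?sqr_ge0 ?invr_ge0 ?mixture_ge0.
rewrite ge0_sum_integral_EFin // -ge0_integralZl_EFin ?invr_ge0 //.
- by move=> x _; rewrite lee_fin sumr_ge0.
- exact/measurable_EFinP/measurable_sum.
Qed.

End domain_loss_integrals.

Theorem theorem2 (d : measure_display) (X : measurableType d) (R : realType)
  (mu : {measure set X -> \bar R}) (N : nat) (P : 'I_N -> X -> R) :
  (2 <= N)%N ->
  (forall i, is_density mu (P i)) ->
  domain_loss mu P =
  ((N%:R^-1)%:E * \sum_(i < N) chi2_neyman mu (P i) (mixture P))%E.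
Proof.
move=> N_ge2 dens.
have mP i : measurable_fun setT (P i) by case: (dens i).
have P_ge0 i x : 0 <= P i x by case: (dens i).
have N_neq0 : N%:R != 0 :> R by rewrite pnatr_eq0 -lt0n (leq_trans _ N_ge2).
rewrite domain_loss_integral // scaled_sum_chi2_neyman_integral //.
apply: eq_integral => x _; congr (_%:E).
exact: sum_mul_sqr_dev_ratio (P ^~ x) N_neq0.
Qed.
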